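(* Let $(E,\rho_\theta)$ be a complete $b_v(\theta)$ metric space whose function $\theta$ is bounded, and let $S:E\to E$ satisfy $\rho_\theta(Su,Sw)\le\alpha\rho_\theta(u,w)+\beta\rho_\theta(u,Su)+\gamma\rho_\theta(w,Sw)$ for all $u,w\in E$, where $\alpha,\beta,\gamma\ge0$ are constants with $\alpha+\beta+\gamma<1$, and where $\Gamma_1<\frac1{\Gamma_2}$ with $\Gamma_1=\min\{\beta,\gamma\}$ and $\Gamma_2=\max\{\theta(u,Su),\theta(Su,u)\}$ (for all $u\in E$). Then $S$ has a unique fixed point. Moreover, for any $u_0\in E$, the sequence $\{u_n\}$ defined by $u_n=Su_{n-1}$ converges to the unique fixed point of $S$.
   Context: Let $E$ be a nonempty set, $\theta:E\times E\to[1,\infty)$ a function and $v\in\mathbb{N}$. A map $\rho_\theta:E\times E\to[0,\infty)$ is a $b_v(\theta)$ metric (and $(E,\rho_\theta)$ a $b_v(\theta)$ metric space) if for all $u,w\in E$: $\rho_\theta(u,w)=0$ iff $u=w$; $\rho_\theta(u,w)=\rho_\theta(w,u)$; and for all $u,z_1,\dots,z_v,w\in E$ pairwise distinct, $\rho_\theta(u,w)\le\theta(u,w)[\rho_\theta(u,z_1)+\rho_\theta(z_1,z_2)+\dots+\rho_\theta(z_{v-1},z_v)+\rho_\theta(z_v,w)]$. A sequence $\{u_n\}$ converges to $u$ if for every $\varepsilon>0$ there is $n_0$ with $\rho_\theta(u_n,u)<\varepsilon$ for all $n\ge n_0$; it is Cauchy if for every $\varepsilon>0$ there is $n_0$ with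 $\rho_\theta(u_n,u_{n+p})<\varepsilon$ for all $n\ge n_0$ and $p>0$; the space is complete if every Cauchy sequence converges in $E$. *)

From Stdlib Require Import Reals List.
Import ListNotations.
Open Scope R_scope.

Section BvMetric.
Variable E : Type.

Fixpoint path_len (rho : E -> E -> R) (l : list E) : R :=
  match l with
  | x :: ((y :: _) as l') => rho x y + path_len rho l'
  | _ => 0
  end.

Definition bv_metric (v : nat) (theta rho : E -> E -> R) : Prop :=
  (forall u w, 1 <= theta u w) /\
  (forall u w, 0 <= rho u w) /\
  (forall u w, rho u w = 0 <-> u = w) /\
  (forall u w, rho u w = rho w u) /\
  (forall (u w : E) (zs : list E), length zs = v ->
      NoDup (u :: zs ++ [w]) ->
      rho u w <= theta u w * path_len rho (u :: zs ++ [w])).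

Definition converges (rho : E -> E -> R) (x : nat -> E) (u : E) : Prop :=
  forall eps, 0 < eps -> exists n0, forall n, (n0 <= n)%nat -> rho (x n) u < eps.

Definition cauchy (rho : E -> E -> R) (x : nat -> E) : Prop :=
  forall eps, 0 < eps -> exists n0, forall n p, (n0 <= n)%nat -> (0 < p)%nat ->
    rho (x n) (x (n + p)%nat) < eps.

Definition complete (rho : E -> E -> R) : Prop :=
  forall x : nat -> E, cauchy rho x -> exists u, converges rho x u.
End BvMetric.

Arguments path_len {E}.
Arguments bv_metric {E}.
Arguments converges {E}.
Arguments cauchy {E}.
Arguments complete {E}.

From Stdlib Require Import Reals List Lra Lia Classical FinFun Wf_nat.
Import ListNotations.
Open Scope R_scope.

(* The orbit steps [rho (u n) (u (S n))] of a Reich-type map decay geometrically with ratio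
   (alpha + beta) / (1 - gamma).  If the orbit repeats a point, that point is fixed.  Otherwise
   the orbit is injective, so its points can serve as the pairwise distinct intermediate points
   of the b_v(theta) inequality.  Routing [rho (u 0) (u p)] through a far-out stretch of the
   orbit (where alpha ^ n is small against the bound of theta) shows that it is bounded, which
   makes [rho (u n) (u (n + p))] decay geometrically: the orbit is Cauchy.  Routing
   [rho x (f x)] through the tail of the orbit converging to [x] gives, in the limit,
   [rho x (f x) <= theta x (f x) * Rmin beta gamma * rho x (f x)], which forces [f x = x]. *)

Lemma path_len_orbit_le {E} (rho : E -> E -> R) (u : nat -> E) x w eps m :
  forall a, (forall i, (i < m)%nat -> rho (u (a + i)%nat) (u (S (a + i))) <= eps) ->
  path_len rho (x :: map u (seq a (S m)) ++ [w])
    <= rho x (u a) + INR m * eps + rho (u (a + m)%nat) w.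
Proof.
  revert x. induction m as [|m IH]; intros x a Hstep.
  - simpl. rewrite Nat.add_0_r. lra.
  - change (path_len rho (x :: map u (seq a (S (S m))) ++ [w]))
      with (rho x (u a) + path_len rho (u a :: map u (seq (S a) (S m)) ++ [w])).
    assert (Hfirst := Hstep 0%nat ltac:(lia)). rewrite Nat.add_0_r in Hfirst.
    assert (Hrest : path_len rho (u a :: map u (seq (S a) (S m)) ++ [w])
                    <= rho (u a) (u (S a)) + INR m * eps + rho (u (a + S m)%nat) w).
    { replace (a + S m)%nat with (S a + m)%nat by lia. apply IH.
      intros i Hi. replace (S a + i)%nat with (a + S i)%nat by lia. apply Hstep. lia. }
    rewrite S_INR. lra.
Qed.

Lemma NoDup_orbit_chain {E} (u : nat -> E) x w a m :
  Injective u -> x <> w ->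
  (forall i, (a <= i < a + m)%nat -> u i <> x /\ u i <> w) ->
  NoDup (x :: map u (seq a m) ++ [w]).
Proof.
  intros u_inj Hxw Hout. apply NoDup_cons.
  - rewrite in_app_iff, in_map_iff. intros [[i [Hi Hin]]|[Hw|[]]].
    + apply in_seq in Hin. exact (proj1 (Hout i Hin) Hi).
    + exact (Hxw (eq_sym Hw)).
  - apply NoDup_app.
    + apply Injective_map_NoDup; [exact u_inj|apply seq_NoDup].
    + repeat constructor. intros [].
    + intros y Hy [Hw|[]]. apply in_map_iff in Hy as [i [Hi Hin]].
      apply in_seq in Hin. rewrite <- Hi in Hw. exact (proj2 (Hout i Hin) (eq_sym Hw)).
Qed.

Lemma injective_eventually_avoids {E} (u : nat -> E) (y : E) :
  Injective u -> exists N, forall i, (N <= i)%nat -> u i <> y.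
Proof.
  intros u_inj. destruct (classic (exists i, u i = y)) as [[i0 Hi0]|Hnone].
  - exists (S i0). intros i Hi Heq. assert (i = i0) by (apply u_inj; congruence). lia.
  - exists 0%nat. intros i _ Heq. apply Hnone. eauto.
Qed.

Lemma bounded_upto (D : nat -> R) (n : nat) : exists B, forall p, (p <= n)%nat -> D p <= B.
Proof.
  induction n as [|n [B HB]].
  - exists (D 0%nat). intros p Hp. replace p with 0%nat by lia. lra.
  - exists (Rmax B (D (S n))). intros p Hp.
    destruct (Nat.eq_dec p (S n)) as [->|Hne]; [apply Rmax_r|].
    eapply Rle_trans; [apply HB; lia|apply Rmax_l].
Qed.

Lemma bounded_of_delayed_contraction (D : nat -> R) (N : nat) (a q : R) :
  (0 < N)%nat -> 0 <= q < 1 -> (forall p, (N < p)%nat -> D p <= a + q * D (p - N)%nat) ->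
  exists B, forall p, D p <= B.
Proof.
  intros HN Hq Hrec. destruct (bounded_upto D N) as [B0 HB0].
  set (B := Rmax (a / (1 - q)) B0). exists B.
  assert (Hfix : a + q * B <= B).
  { assert (a / (1 - q) <= B) by apply Rmax_l.
    assert (a <= (1 - q) * B); [|lra].
    replace a with ((1 - q) * (a / (1 - q))) by (field; lra).
    apply Rmult_le_compat_l; lra. }
  intros p. induction p as [p IH] using lt_wf_ind.
  destruct (Nat.le_gt_cases p N) as [HpN|HpN].
  - eapply Rle_trans; [apply HB0, HpN|apply Rmax_r].
  - assert (D (p - N)%nat <= B) by (apply IH; lia).
    assert (q * D (p - N)%nat <= q * B) by (apply Rmult_le_compat_l; lra).
    specialize (Hrec p HpN). lra.
Qed.

Lemma cauchy_of_geometric_bound {E} (rho : E -> E -> R) (u : nat -> E) (K r : R) :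
  0 <= K -> 0 <= r < 1 -> (forall n p, rho (u n) (u (n + p)%nat) <= K * r ^ n) ->
  cauchy rho u.
Proof.
  intros HK Hr Hbound eps Heps.
  assert (Heps' : 0 < eps / (K + 1)) by (apply Rdiv_lt_0_compat; lra).
  destruct (pow_lt_1_zero r ltac:(rewrite Rabs_pos_eq; lra) _ Heps') as [N HN].
  exists N. intros n p Hn _. specialize (HN n Hn).
  rewrite Rabs_pos_eq in HN by (apply pow_le; lra).
  assert (K * r ^ n <= K * (eps / (K + 1))) by (apply Rmult_le_compat_l; lra).
  assert (K * (eps / (K + 1)) = eps - eps / (K + 1)) by (field; lra).
  specialize (Hbound n p). lra.
Qed.

Lemma mul_lt_1_of_lt_inv_Rmax (a t t' : R) :
  0 <= a -> 0 < t -> a < 1 / Rmax t t' -> a * t < 1.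
Proof.
  intros Ha Ht Hlt. set (m := Rmax t t') in *.
  assert (Htm : t <= m) by apply Rmax_l.
  assert (a * t <= a * m) by (apply Rmult_le_compat_l; lra).
  assert (a * m < 1 / m * m) by (apply Rmult_lt_compat_r; lra).
  replace (1 / m * m) with 1 in * by (field; lra). lra.
Qed.

Section GeometricDecay.
Variables (d : nat -> R) (k : R).
Hypotheses (d_ge0 : forall n, 0 <= d n) (k_ge0 : 0 <= k) (k_lt1 : k < 1)
  (d_step : forall n, d (S n) <= k * d n).

Lemma geometric_le_pow n : d n <= k ^ n * d 0%nat.
Proof.
  induction n as [|n IH]; simpl; [lra|].
  assert (k * d n <= k * (k ^ n * d 0%nat)) by (apply Rmult_le_compat_l; lra).
  specialize (d_step n). lra.
Qed.

Lemma geometric_antitone i t : d (i + t)%nat <= d i.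
Proof.
  induction t as [|t IH]; [rewrite Nat.add_0_r; lra|].
  rewrite Nat.add_succ_r. specialize (d_step (i + t)%nat). specialize (d_ge0 (i + t)%nat).
  nra.
Qed.

Lemma geometric_eventually_lt eps : 0 < eps -> exists N, forall n, (N <= n)%nat -> d n < eps.
Proof.
  intros Heps. assert (Hd0 := d_ge0 0%nat).
  assert (Heps' : 0 < eps / (d 0%nat + 1)) by (apply Rdiv_lt_0_compat; lra).
  destruct (pow_lt_1_zero k ltac:(rewrite Rabs_pos_eq; lra) _ Heps') as [N HN].
  exists N. intros n Hn. specialize (HN n Hn).
  rewrite Rabs_pos_eq in HN by (apply pow_le; lra).
  assert (k ^ n * d 0%nat <= eps / (d 0%nat + 1) * d 0%nat) by (apply Rmult_le_compat_r; lra).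
  assert (eps / (d 0%nat + 1) * d 0%nat = eps - eps / (d 0%nat + 1)) by (field; lra).
  assert (Hpow := geometric_le_pow n). lra.
Qed.

Lemma geometric_repeat_eq0 i j : (i < j)%nat -> d j = d i -> d i = 0.
Proof.
  intros Hij Heq.
  assert (Hj : d j <= d (S i)).
  { replace j with (S i + (j - S i))%nat by lia. apply geometric_antitone. }
  specialize (d_step i). specialize (d_ge0 i). nra.
Qed.

End GeometricDecay.

Section ReichMap.
Variables (E : Type) (rho : E -> E -> R) (f : E -> E) (alpha beta gamma : R).
Hypotheses (rho_ge0 : forall x y, 0 <= rho x y)
  (rho_eq0 : forall x y, rho x y = 0 <-> x = y)
  (rho_sym : forall x y, rho x y = rho y x)
  (alpha_ge0 : 0 <= alpha) (beta_ge0 : 0 <= beta) (gamma_ge0 : 0 <= gamma)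
  (abg_lt1 : alpha + beta + gamma < 1)
  (f_reich : forall x y,
     rho (f x) (f y) <= alpha * rho x y + beta * rho x (f x) + gamma * rho y (f y)).
Variables (theta : E -> E -> R) (M : R) (v : nat).
Hypotheses (theta_ge1 : forall x y, 1 <= theta x y) (theta_le : forall x y, theta x y <= M)
  (* [S v] intermediate points: this [v] is one less than the [v] of [bv_metric]. *)
  (rho_polygon : forall x y zs, length zs = S v -> NoDup (x :: zs ++ [y]) ->
     rho x y <= theta x y * path_len rho (x :: zs ++ [y])).

Lemma reich_fixpoint_unique x y : f x = x -> f y = y -> x = y.
Proof.
  intros Hx Hy. apply rho_eq0. specialize (f_reich x y).
  rewrite Hx, Hy, (proj2 (rho_eq0 x x) eq_refl), (proj2 (rho_eq0 y y) eq_refl) in f_reich.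
  specialize (rho_ge0 x y). nra.
Qed.

Lemma reich_Rmax_Rmin x y :
  rho (f x) (f y)
    <= alpha * rho x y + Rmax beta gamma * rho x (f x) + Rmin beta gamma * rho y (f y).
Proof.
  destruct (Rle_dec beta gamma).
  - rewrite Rmin_left, Rmax_right, (rho_sym (f x)), (rho_sym x y) by lra.
    specialize (f_reich y x). lra.
  - rewrite Rmin_right, Rmax_left by lra. apply f_reich.
Qed.

Definition reich_ratio := (alpha + beta) / (1 - gamma).

Lemma reich_ratio_ge0 : 0 <= reich_ratio.
Proof. unfold reich_ratio. apply Rmult_le_pos; [lra|left; apply Rinv_0_lt_compat; lra]. Qed.

Lemma reich_ratio_lt1 : reich_ratio < 1.
Proof.
  unfold reich_ratio. apply (Rmult_lt_reg_r (1 - gamma)); [lra|].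
  replace ((alpha + beta) / (1 - gamma) * (1 - gamma)) with (alpha + beta) by (field; lra).
  lra.
Qed.

Section Orbit.
Variable u : nat -> E.
Hypothesis u_succ : forall n, u (S n) = f (u n).

Lemma orbit_step_contract n :
  rho (u (S n)) (u (S (S n))) <= reich_ratio * rho (u n) (u (S n)).
Proof.
  assert (H := f_reich (u n) (u (S n))). rewrite <- !u_succ in H.
  apply (Rmult_le_reg_l (1 - gamma)); [lra|].
  unfold reich_ratio. field_simplify; lra.
Qed.

Local Notation d n := (rho (u n) (u (S n))).

Lemma orbit_step_le_pow n : d n <= reich_ratio ^ n * d 0%nat.
Proof.
  apply (geometric_le_pow (fun n => d n)).
  all: auto using reich_ratio_ge0, orbit_step_contract.
Qed.

Lemma orbit_step_antitone i t : d (i + t)%nat <= d i.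
Proof.
  apply (geometric_antitone (fun n => d n) reich_ratio).
  all: auto using reich_ratio_lt1, orbit_step_contract.
Qed.

Lemma orbit_step_eventually_lt eps : 0 < eps -> exists N, forall n, (N <= n)%nat -> d n < eps.
Proof.
  apply (geometric_eventually_lt (fun n => d n) reich_ratio).
  all: auto using reich_ratio_ge0, reich_ratio_lt1, orbit_step_contract.
Qed.

Lemma orbit_repeat_fixed i j :
  (i < j)%nat -> u i = u j -> f (u i) = u i /\ converges rho u (u i).
Proof.
  intros Hij Heq.
  assert (Hdi : d i = 0).
  { apply (geometric_repeat_eq0 (fun n => d n) reich_ratio) with (j := j).
    all: auto using reich_ratio_lt1, orbit_step_contract.
    simpl. rewrite !u_succ, Heq. reflexivity. }
  assert (Hfix : f (u i) = u i) by (rewrite <- u_succ; symmetry; apply rho_eq0, Hdi).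
  assert (Hconst : forall t, u (i + t)%nat = u i).
  { induction t as [|t IH]; [now rewrite Nat.add_0_r|].
    now rewrite Nat.add_succ_r, u_succ, IH. }
  split; [exact Hfix|]. intros eps Heps. exists i. intros n Hn.
  replace n with (i + (n - i))%nat by lia. rewrite Hconst, (proj2 (rho_eq0 _ _) eq_refl).
  exact Heps.
Qed.

(* The constant solves [C = alpha * C + (beta + gamma) * d 0]; every step [d n] is at most [d 0]. *)
Lemma orbit_shift_le t a b :
  rho (u (a + t)%nat) (u (b + t)%nat)
    <= alpha ^ t * rho (u a) (u b) + (beta + gamma) * d 0%nat / (1 - alpha).
Proof.
  set (C := (beta + gamma) * d 0%nat / (1 - alpha)).
  assert (HC : alpha * C + (beta + gamma) * d 0%nat = C) by (unfold C; field; lra).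
  assert (HC0 : 0 <= C) by (assert (Hd0 := rho_ge0 (u 0%nat) (u 1%nat)); nra).
  induction t as [|t IH]; [rewrite !Nat.add_0_r; simpl; lra|].
  rewrite !Nat.add_succ_r, !u_succ.
  assert (Ha := orbit_step_antitone 0 (a + t)). assert (Hb := orbit_step_antitone 0 (b + t)).
  simpl in Ha, Hb. rewrite (u_succ (a + t)) in Ha. rewrite (u_succ (b + t)) in Hb.
  assert (alpha * rho (u (a + t)%nat) (u (b + t)%nat) <= alpha * (alpha ^ t * rho (u a) (u b) + C))
    by (apply Rmult_le_compat_l; lra).
  assert (beta * rho (u (a + t)%nat) (f (u (a + t)%nat)) <= beta * d 0%nat)
    by (apply Rmult_le_compat_l; lra).
  assert (gamma * rho (u (b + t)%nat) (f (u (b + t)%nat)) <= gamma * d 0%nat)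
    by (apply Rmult_le_compat_l; lra).
  specialize (f_reich (u (a + t)%nat) (u (b + t)%nat)). simpl pow. lra.
Qed.

(* [rho (u n) (u (n + p)) <= K * r ^ n] by induction on [n], with [r] strictly between
   [Rmax alpha reich_ratio] and [1], and [K] so large that
   [alpha * K + (beta + gamma) * d 0 <= K * r]. *)
Lemma orbit_cauchy_of_bounded B : (forall p, rho (u 0%nat) (u p) <= B) -> cauchy rho u.
Proof.
  intros HB.
  set (r := (1 + Rmax alpha reich_ratio) / 2).
  assert (Hmax : Rmax alpha reich_ratio < 1) by (apply Rmax_lub_lt; [lra|apply reich_ratio_lt1]).
  assert (Hr : alpha < r /\ reich_ratio < r /\ r < 1).
  { assert (alpha <= Rmax alpha reich_ratio) by apply Rmax_l.
    assert (reich_ratio <= Rmax alpha reich_ratio) by apply Rmax_r. unfold r. lra. }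
  assert (Hk0 := reich_ratio_ge0). assert (Hd0 := rho_ge0 (u 0%nat) (u 1%nat)).
  set (K := B + (beta + gamma) * d 0%nat / (r - alpha)).
  assert (HBK : B <= K).
  { assert (0 <= (beta + gamma) * d 0%nat / (r - alpha)); [|unfold K; lra].
    apply Rmult_le_pos; [nra|left; apply Rinv_0_lt_compat; lra]. }
  assert (HK : (beta + gamma) * d 0%nat <= K * (r - alpha)).
  { replace ((beta + gamma) * d 0%nat) with ((K - B) * (r - alpha)) by (unfold K; field; lra).
    specialize (HB 0%nat). specialize (rho_ge0 (u 0%nat) (u 0%nat)). nra. }
  apply (cauchy_of_geometric_bound rho u K r); [|lra|].
  { specialize (HB 0%nat). specialize (rho_ge0 (u 0%nat) (u 0%nat)). lra. }
  induction n as [|n IH]; intros p; [simpl; specialize (HB p); lra|].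
  change (S n + p)%nat with (S (n + p)). rewrite !u_succ.
  assert (Hrn : 0 <= r ^ n) by (apply pow_le; lra).
  assert (Hdn : d n <= r ^ n * d 0%nat).
  { eapply Rle_trans; [apply orbit_step_le_pow|].
    apply Rmult_le_compat_r; [lra|apply pow_incr; lra]. }
  assert (Hdnp := orbit_step_antitone n p).
  rewrite (u_succ n) in Hdn, Hdnp. rewrite (u_succ (n + p)) in Hdnp.
  assert (alpha * rho (u n) (u (n + p)%nat) <= alpha * (K * r ^ n))
    by (apply Rmult_le_compat_l; [lra|apply IH]).
  assert (beta * rho (u n) (f (u n)) <= beta * (r ^ n * d 0%nat)) by (apply Rmult_le_compat_l; lra).
  assert (gamma * rho (u (n + p)%nat) (f (u (n + p)%nat)) <= gamma * (r ^ n * d 0%nat))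
    by (apply Rmult_le_compat_l; lra).
  assert (r ^ n * ((beta + gamma) * d 0%nat) <= r ^ n * (K * (r - alpha)))
    by (apply Rmult_le_compat_l; lra).
  specialize (f_reich (u n) (u (n + p)%nat)). simpl pow. lra.
Qed.

Hypothesis u_inj : Injective u.

Lemma orbit_chain_le x w a eps :
  x <> w -> (forall i, (a <= i <= a + v)%nat -> u i <> x /\ u i <> w) ->
  (forall i, (i < v)%nat -> d (a + i)%nat <= eps) ->
  rho x w <= theta x w * (rho x (u a) + INR v * eps + rho (u (a + v)%nat) w).
Proof.
  intros Hxw Hout Hsteps.
  assert (Hpoly : rho x w <= theta x w * path_len rho (x :: map u (seq a (S v)) ++ [w])).
  { apply rho_polygon; [now rewrite length_map, length_seq|].
    apply NoDup_orbit_chain; [exact u_inj|exact Hxw|]. intros i Hi. apply Hout. lia. }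
  assert (Hlen := path_len_orbit_le rho u x w eps v a Hsteps).
  assert (theta x w * path_len rho (x :: map u (seq a (S v)) ++ [w])
          <= theta x w * (rho x (u a) + INR v * eps + rho (u (a + v)%nat) w))
    by (apply Rmult_le_compat_l; [specialize (theta_ge1 x w); lra|exact Hlen]).
  lra.
Qed.

(* Going through [u m, ..., u (m + v)] with [M * alpha ^ (m + v) < 1] bounds [rho (u 0) (u p)]
   by a constant plus a fraction of [rho (u 0) (u (p - (m + v)))]. *)
Lemma orbit_dist_bounded : exists B, forall p, rho (u 0%nat) (u p) <= B.
Proof.
  assert (HM : 1 <= M)
    by (eapply Rle_trans; [apply (theta_ge1 (u 0%nat) (u 0%nat))|apply theta_le]).
  destruct (pow_lt_1_zero alpha ltac:(rewrite Rabs_pos_eq; lra) (/ M)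
              ltac:(apply Rinv_0_lt_compat; lra)) as [N HN].
  set (m := S N). set (C := (beta + gamma) * d 0%nat / (1 - alpha)).
  assert (Hq : 0 <= M * alpha ^ (m + v) < 1).
  { assert (H := HN (m + v)%nat ltac:(unfold m; lia)).
    rewrite Rabs_pos_eq in H by (apply pow_le; lra).
    assert (0 <= alpha ^ (m + v)) by (apply pow_le; lra).
    apply (Rmult_lt_compat_l M) in H; [|lra]. rewrite Rinv_r in H by lra. nra. }
  apply (bounded_of_delayed_contraction (fun p => rho (u 0%nat) (u p)) (m + v)
           (M * (rho (u 0%nat) (u m) + INR v * d 0%nat + C)) (M * alpha ^ (m + v)));
    [unfold m; lia|exact Hq|].
  intros p Hp.
  assert (Hchain : rho (u 0%nat) (u p)
            <= theta (u 0%nat) (u p) * (rho (u 0%nat) (u m) + INR v * d 0%nat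
                                        + rho (u (m + v)%nat) (u p))).
  { apply orbit_chain_le.
    - intros Heq. apply u_inj in Heq. lia.
    - intros i Hi. split; intros Heq; apply u_inj in Heq; unfold m in *; lia.
    - intros i _. apply (orbit_step_antitone 0). }
  assert (Hshift := orbit_shift_le (m + v) 0 (p - (m + v))).
  rewrite Nat.add_0_l, Nat.sub_add in Hshift by lia. fold C in Hshift.
  set (X := rho (u 0%nat) (u m) + INR v * d 0%nat + rho (u (m + v)%nat) (u p)) in Hchain.
  assert (HX : 0 <= X).
  { assert (0 <= INR v * d 0%nat) by (apply Rmult_le_pos; [apply pos_INR|apply rho_ge0]).
    assert (Hm := rho_ge0 (u 0%nat) (u m)). assert (Hp' := rho_ge0 (u (m + v)%nat) (u p)).
    unfold X. lra. }
  assert (theta (u 0%nat) (u p) * X <= M * X) by (apply Rmult_le_compat_r; [lra|apply theta_le]).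
  assert (M * X <= M * (rho (u 0%nat) (u m) + INR v * d 0%nat + C
                        + alpha ^ (m + v) * rho (u 0%nat) (u (p - (m + v))%nat)))
    by (apply Rmult_le_compat_l; unfold X; lra).
  cbv beta. lra.
Qed.

(* The chain [x, u (S n), ..., u (S n + v), f x] bounds [rho x (f x)] by
   [theta x (f x) * Rmin beta gamma * rho x (f x)] plus an error vanishing with [n]. *)
Lemma orbit_limit_fixed x :
  converges rho u x -> Rmin beta gamma * theta x (f x) < 1 -> f x = x.
Proof.
  intros Hx Hmin. apply NNPP. intros Hne.
  destruct (injective_eventually_avoids u x u_inj) as [N1 HN1].
  destruct (injective_eventually_avoids u (f x) u_inj) as [N2 HN2].
  set (T := theta x (f x)) in *. set (g := Rmin beta gamma) in *. set (h := Rmax beta gamma).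
  assert (HT : 1 <= T) by apply theta_ge1.
  assert (Hh : 0 <= h) by (eapply Rle_trans; [exact beta_ge0|apply Rmax_l]).
  set (c := 1 + INR v + alpha + h).
  assert (Hc : 0 < c) by (assert (0 <= INR v) by apply pos_INR; unfold c; lra).
  assert (Hsmall : forall eps, 0 < eps -> (1 - g * T) * rho x (f x) <= T * c * eps).
  { intros eps Heps.
    destruct (Hx eps Heps) as [n1 Hn1]. destruct (orbit_step_eventually_lt eps Heps) as [n2 Hn2].
    set (n := (N1 + N2 + n1 + n2)%nat).
    assert (Hchain : rho x (f x)
              <= T * (rho x (u (S n)) + INR v * eps + rho (u (S n + v)%nat) (f x))).
    { apply orbit_chain_le; [intros Heq; apply Hne; now symmetry| |].
      - intros i Hi. split; [apply HN1|apply HN2]; unfold n in *; lia.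
      - intros i _. left. apply Hn2. unfold n. lia. }
    rewrite Nat.add_succ_l, (u_succ (n + v)) in Hchain.
    assert (Hreich := reich_Rmax_Rmin (u (n + v)%nat) x). fold g h in Hreich.
    assert (H1 : rho x (u (S n)) < eps) by (rewrite rho_sym; apply Hn1; unfold n; lia).
    assert (H2 : rho (u (n + v)%nat) x < eps) by (apply Hn1; unfold n; lia).
    assert (H3 : rho (u (n + v)%nat) (f (u (n + v)%nat)) < eps)
      by (rewrite <- u_succ; apply Hn2; unfold n; lia).
    assert (alpha * rho (u (n + v)%nat) x <= alpha * eps) by (apply Rmult_le_compat_l; lra).
    assert (h * rho (u (n + v)%nat) (f (u (n + v)%nat)) <= h * eps)
      by (apply Rmult_le_compat_l; lra).
    assert (T * (rho x (u (S n)) + INR v * eps + rho (f (u (n + v)%nat)) (f x))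
            <= T * (c * eps + g * rho x (f x)))
      by (apply Rmult_le_compat_l; unfold c; lra).
    lra. }
  assert (Hgap : 0 < 1 - g * T) by lra.
  assert (Hle : (1 - g * T) * rho x (f x) <= 0).
  { apply Rle_plus_epsilon. intros eps Heps.
    assert (Heps' : 0 < eps / (T * c)) by (apply Rdiv_lt_0_compat; nra).
    specialize (Hsmall _ Heps').
    replace (T * c * (eps / (T * c))) with eps in Hsmall by (field; nra). lra. }
  assert (Hzero : rho x (f x) = 0) by (specialize (rho_ge0 x (f x)); nra).
  apply Hne. symmetry. now apply rho_eq0.
Qed.

End Orbit.

Hypotheses (rho_complete : complete rho)
  (theta_Rmin_lt1 : forall x, Rmin beta gamma * theta x (f x) < 1).

Lemma picard_converges_to_fixpoint u0 :
  exists x, f x = x /\ converges rho (fun n => Nat.iter n f u0) x.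
Proof.
  set (u := fun n => Nat.iter n f u0).
  assert (u_succ : forall n, u (S n) = f (u n)) by reflexivity.
  destruct (classic (exists i j, (i < j)%nat /\ u i = u j)) as [[i [j [Hij Heq]]]|Hnorep].
  - exists (u i). exact (orbit_repeat_fixed u u_succ i j Hij Heq).
  - assert (u_inj : Injective u).
    { intros i j Heq. destruct (Nat.lt_total i j) as [Hij|[Hij|Hij]]; [|exact Hij|];
        exfalso; apply Hnorep; eauto. }
    destruct (orbit_dist_bounded u u_succ u_inj) as [B HB].
    destruct (rho_complete u (orbit_cauchy_of_bounded u u_succ B HB)) as [x Hx].
    exists x. split; [|exact Hx].
    exact (orbit_limit_fixed u u_succ u_inj x Hx (theta_Rmin_lt1 x)).
Qed.

End ReichMap.

Theorem mainTheorem11 (E : Type) (v : nat) (theta rho : E -> E -> R)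
  (S : E -> E) (alpha beta gamma : R) :
  inhabited E -> (0 < v)%nat ->
  bv_metric v theta rho ->
  complete rho ->
  (exists M : R, forall u w, theta u w <= M) ->
  0 <= alpha -> 0 <= beta -> 0 <= gamma -> alpha + beta + gamma < 1 ->
  (forall u w, rho (S u) (S w) <= alpha * rho u w + beta * rho u (S u) + gamma * rho w (S w)) ->
  (forall u, Rmin beta gamma < 1 / Rmax (theta u (S u)) (theta (S u) u)) ->
  exists x : E, S x = x /\ (forall y, S y = y -> y = x) /\
    (forall u0 : E, converges rho (fun n => Nat.iter n S u0) x).
Proof.
  intros [e0] Hv [theta_ge1 [rho_ge0 [rho_eq0 [rho_sym rho_polygon]]]] rho_complete [M theta_le]
    alpha_ge0 beta_ge0 gamma_ge0 abg_lt1 S_reich Hmin.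
  destruct v as [|v]; [lia|].
  assert (theta_Rmin_lt1 : forall x, Rmin beta gamma * theta x (S x) < 1).
  { intros x. apply mul_lt_1_of_lt_inv_Rmax with (theta (S x) x).
    - apply Rmin_glb; lra.
    - specialize (theta_ge1 x (S x)); lra.
    - apply Hmin. }
  assert (Hpicard : forall u0, exists x, S x = x /\ converges rho (fun n => Nat.iter n S u0) x)
    by (intros u0; eapply (picard_converges_to_fixpoint E rho S alpha beta gamma); eassumption).
  assert (Hunique : forall x y, S x = x -> S y = y -> x = y)
    by (eapply (reich_fixpoint_unique E rho S alpha beta gamma); eassumption).
  destruct (Hpicard e0) as [x [Hx _]].
  exists x. split; [exact Hx|split].
  - intros y Hy. exact (Hunique y x Hy Hx).
  - intros u0. destruct (Hpicard u0) as [x' [Hx' Hconv]].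
    now rewrite (Hunique x x' Hx Hx').
Qed.
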